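(* If the transition dynamics are deterministic, the policy that maximizes expected return is the policy that minimizes the time-step metric, i.e. $\pi^* = \pi^{\min}$, where $\pi^{\min}$ denotes the policy attaining the minimum time-step distance $d^{\min}_T(s, s_g)$ to the goal.
   Context: Consider a goal-conditioned MDP $\langle \mathcal{S}, \mathcal{A}, \mathcal{G}, P, \rho_0, \sigma, \gamma \rangle$ with discrete state space $\mathcal{S}$, discrete action space $\mathcal{A}$, goal set $\mathcal{G} \subseteq \mathcal{S}$, goal-conditioned transition dynamics $P(\cdot|s,a,s_g)$, start distribution $\rho_0$, goal distribution $\sigma$, and discount $\gamma \in [0,1)$. The reward is $r(s_t,a_t,s_{t+1}|s_g) = \mathbb{I}[s_{t+1}=s_g]$, and on reaching the goal the agent transitions to an absorbing state with zero reward thereafter (the episode terminates). Policies are $\pi(\cdot|s,s_g)$, and $\pi^*$ maximizes expected discounted return $\mathbb{E}[\sum_t \gamma^t r(s_t,a_t,s_{t+1}|s_g)]$. The time-step metric is $d^\pi_T(s, s_g) = \mathbb{E}[T(s_g|\pi, s)]$, where $T(s_g|\pi,s)$ is the random first time-step at which $s_g$ is reached starting from $s$ under $\pi$. The minimum time-step distance $d^{\min}_T$ satisfies the Bellman optimality condition $d^{\min}_T(s,s_g)=0$ if $s=s_g$ and $d^{\min}_T(s,s_g) = 1 + \min_{a} \sum_{s'} P(s'|s,a,s_g)\, d^{\min}_T(s',s_g)$ otherwise; $\pi^{\min}$ is the corresponding policy. The value under this reward is $V^\pi(s|s_g) = \mathbb{E}[\gamma^{T(s_g|\pi,s)}]$.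 *)

From HB Require Import structures.
From mathcomp Require Import all_boot all_order all_algebra.
From mathcomp Require Import all_classical all_reals all_analysis.
Set Implicit Arguments. Unset Strict Implicit. Unset Printing Implicit Defensive.
Import Order.TTheory GRing.Theory Num.Theory.
Local Open Scope ring_scope.

(* Goal-conditioned MDP with finite state type S and finite action type A.
   Transition gc_kernel: [P s a g s'] = P(s' | s, a, s_g). *)
Section GCMDP.
Variables (R : realType) (S A : finType).

Definition gc_kernel := S -> A -> S -> S -> R.
(* Stochastic goal-conditioned gc_policy: [pi s g a] = pi(a | s, s_g). *)
Definition gc_policy := S -> S -> A -> R.

Definition is_policy (pi : gc_policy) : Prop :=
  (forall s g a, 0 <= pi s g a) /\ (forall s g, \sum_(a : A) pi s g a = 1).

Definition deterministic (P : gc_kernel) : Prop :=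
  exists f : S -> A -> S -> S,
    forall s a g s', P s a g s' = (s' == f s a g)%:R.

(* [hit_prob P pi g n s] = Pr[ T(s_g | pi, s) = n ]: probability that the
   goal g is reached for the first time at time step n, starting from s. *)
Fixpoint hit_prob (P : gc_kernel) (pi : gc_policy) (g : S) (n : nat) (s : S) : R :=
  match n with
  | 0 => (s == g)%:R
  | n'.+1 => if s == g then 0 else
      \sum_(a : A) pi s g a * \sum_(s' : S) P s a g s' * hit_prob P pi g n' s'
  end.

Local Open Scope ereal_scope.

(* V^pi(s | s_g) = E[ gamma ^ T(s_g | pi, s) ]  (gamma^oo = 0). *)
Definition value (P : gc_kernel) (gamma : R) (pi : gc_policy) (s g : S) : \bar R :=
  \sum_(0 <= n <oo) ((gamma ^+ n * hit_prob P pi g n s)%R)%:E.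

Definition reach_prob (P : gc_kernel) (pi : gc_policy) (s g : S) : \bar R :=
  \sum_(0 <= n <oo) (hit_prob P pi g n s)%:E.

Definition dT (P : gc_kernel) (pi : gc_policy) (s g : S) : \bar R :=
  if reach_prob P pi s g < 1 then +oo
  else \sum_(0 <= n <oo) ((n%:R * hit_prob P pi g n s)%R)%:E.

Definition time_minimal (P : gc_kernel) (G : {set S}) (pi : gc_policy) : Prop :=
  forall pi', is_policy pi' ->
    forall s g, g \in G -> dT P pi s g <= dT P pi' s g.

Definition return_optimal (P : gc_kernel) (G : {set S}) (gamma : R)
    (pi : gc_policy) : Prop :=
  forall pi', is_policy pi' ->
    forall s g, g \in G -> value P gamma pi' s g <= value P gamma pi s g.

End GCMDP.

From HB Require Import structures.
From mathcomp Require Import all_boot all_order all_algebra.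
From mathcomp Require Import all_classical all_reals all_analysis.
Set Implicit Arguments.
Unset Strict Implicit.
Unset Printing Implicit Defensive.
Import Order.TTheory GRing.Theory Num.Theory.
Local Open Scope ring_scope.

(* Under deterministic dynamics, every policy reaches g from s no earlier than
   the graph distance d = goal_dist g s, and the greedy policy, which always
   moves to a state one step closer to g, reaches it exactly at time d.  Hence
   every value is at most gamma^d and every expected hitting time at least d,
   both bounds being attained by the greedy policy.  Equality in either bound
   forces the hitting time to be d almost surely: a late hit costs at least 1
   in time and at least gamma^d - gamma^(d+1) > 0 in value.  So a policy optimal
   for one criterion has the hitting-time law of the greedy policy and is
   therefore optimal for the other. *)

Lemma sum_pred1_mul (R : pzSemiRingType) (T : finType) (F : T -> R) (b : T) :
  \sum_(a : T) (a == b)%:R * F a = F b.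
Proof.
rewrite (bigD1 b) //= eqxx mul1r big1 ?addr0 // => a /negbTE ->.
by rewrite mul0r.
Qed.

Local Open Scope ereal_scope.

Section NonnegSeries.
Variables (R : realType) (u : nat -> R).
Hypothesis u_ge0 : forall n, (0 <= u n)%R.

Lemma nneseries_supp1 (d : nat) : (forall n, n != d -> u n = 0%R) ->
  \sum_(0 <= n <oo) (u n)%:E = (u d)%:E.
Proof.
move=> u_supp; rewrite (nneseriesD1 (n:=d)) //; last by move=> n _; rewrite lee_fin.
by rewrite eseries0 ?adde0 // => n _ /andP[_ /u_supp ->].
Qed.

Lemma nneseries_le1 : (forall N, (\sum_(n < N) u n <= 1)%R) ->
  \sum_(0 <= n <oo) (u n)%:E <= 1.
Proof.
move=> psum_le1; apply: lime_le.
  by apply: is_cvg_nneseries => n _ _; rewrite lee_fin.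
by apply: nearW => N; rewrite sumEFin lee_fin big_mkord.
Qed.

Lemma nneseries_le0_eq0 : \sum_(0 <= n <oo) (u n)%:E <= 0 -> forall n, u n = 0%R.
Proof.
move=> series_le0 n; apply/eqP; rewrite eq_le u_ge0 andbT -lee_fin.
apply: le_trans series_le0; rewrite (nneseriesD1 (n:=n)) //; last by move=> k _; rewrite lee_fin.
by rewrite leeDl //; apply: nneseries_ge0 => k _ _; rewrite lee_fin.
Qed.

End NonnegSeries.

Section HittingTimeDistribution.
Variables (R : realType) (h : nat -> R) (d : nat).
Hypotheses (h_ge0 : forall n, (0 <= h n)%R)
  (h_psum_le1 : forall N, (\sum_(n < N) h n <= 1)%R)
  (h_lt_d : forall n, (n < d)%N -> h n = 0%R).

Local Notation mass := (\sum_(0 <= n <oo) (h n)%:E).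
Local Notation mean := (\sum_(0 <= n <oo) ((n%:R * h n)%R)%:E).
Local Notation discounted gamma := (\sum_(0 <= n <oo) ((gamma ^+ n * h n)%R)%:E).
Local Notation tail := (\sum_(0 <= n <oo) (((d < n)%N%:R * h n)%R)%:E).

Let tail_term_ge0 n : (0 <= (d < n)%N%:R * h n)%R.
Proof. by rewrite mulr_ge0. Qed.

Let tail_ge0 : 0 <= tail.
Proof. by apply: nneseries_ge0 => n _ _; rewrite lee_fin. Qed.

Let supp1_of_tail_le0 : tail <= 0 -> forall n, n != d -> h n = 0%R.
Proof.
move=> tail_le0 n; case: (ltngtP n d) => // [/h_lt_d // | dn _].
by have := nneseries_le0_eq0 tail_term_ge0 tail_le0 n; rewrite dn mul1r.
Qed.

Let dirac_of_tail_le0 : tail <= 0 -> (1 <= h d)%R -> forall n, h n = (n == d)%:R.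
Proof.
move=> tail_le0 hd_ge1 n; have [-> | nd] := eqVneq n d; last exact: supp1_of_tail_le0.
apply/eqP; rewrite eq_le hd_ge1 andbT.
have := h_psum_le1 d.+1; rewrite big_ord_recr /= big1 ?add0r // => i _.
exact: h_lt_d.
Qed.

Lemma mean_ge_tail : 1 <= mass -> d%:R%:E + tail <= mean.
Proof.
move=> mass_ge1; apply: (@le_trans _ _ (d%:R%:E * mass + tail)).
  by rewrite leeD2r // -{1}[d%:R%:E]mule1 lee_wpmul2l // lee_fin.
rewrite -nneseriesZl; last by move=> n _; rewrite lee_fin.
under eq_eseriesr do rewrite -EFinM.
rewrite -nneseriesD; last 2 first.
- by move=> n _ _; rewrite lee_fin mulr_ge0.
- by move=> n _ _; rewrite lee_fin.
apply: lee_nneseries => [n _ _ | n _]; first by rewrite lee_fin addr_ge0 ?mulr_ge0.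
rewrite -EFinD lee_fin; case: (ltngtP n d) => [/h_lt_d -> | dn | ->].
- by rewrite !mulr0 addr0.
- by rewrite -mulrDl -natrD addn1 ler_wpM2r // ler_nat.
- by rewrite mul0r addr0.
Qed.

Lemma mean_ge : 1 <= mass -> d%:R%:E <= mean.
Proof. by move=> /mean_ge_tail; apply: le_trans; rewrite leeDl. Qed.

Lemma mean_le_dirac : 1 <= mass -> mean <= d%:R%:E -> forall n, h n = (n == d)%:R.
Proof.
move=> mass_ge1 mean_le; have tail_le0 : tail <= 0.
  by rewrite -(leeD2lE (x := d%:R%:E)) // adde0 (le_trans (mean_ge_tail mass_ge1)).
apply: dirac_of_tail_le0 => //; rewrite -lee_fin -(nneseries_supp1 h_ge0) //.
exact: supp1_of_tail_le0.
Qed.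

Lemma discounted_tail_le (gamma : R) : (0 <= gamma <= 1)%R ->
  discounted gamma + (gamma ^+ d - gamma ^+ d.+1)%:E * tail <= (gamma ^+ d)%:E.
Proof.
move=> /andP[gamma_ge0 gamma_le1].
have gamma_pow_ge0 n : (0 <= gamma ^+ n)%R by rewrite exprn_ge0.
have c_ge0 : (0 <= gamma ^+ d - gamma ^+ d.+1)%R by rewrite subr_ge0 ler_wiXn2l.
apply: (@le_trans _ _ ((gamma ^+ d)%:E * mass)); last first.
  rewrite -{2}[(gamma ^+ d)%:E]mule1 lee_wpmul2l ?lee_fin //.
  exact: nneseries_le1.
rewrite -!nneseriesZl; last 2 first.
- by move=> n _; rewrite lee_fin.
- by move=> n _; rewrite lee_fin.
rewrite -nneseriesD; last 2 first.
- by move=> n _ _; rewrite lee_fin mulr_ge0.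
- by move=> n _ _; rewrite -EFinM lee_fin mulr_ge0.
apply: lee_nneseries => [n _ _ | n _].
  by rewrite -EFinM -EFinD lee_fin addr_ge0 ?mulr_ge0.
rewrite -!EFinM -EFinD lee_fin; case: (ltngtP n d) => [/h_lt_d -> | dn | ->].
- by rewrite !mulr0 addr0.
- rewrite mul1r -mulrDl ler_wpM2r // addrCA gerDl subr_le0.
  exact: ler_wiXn2l.
- by rewrite mul0r mulr0 addr0.
Qed.

Lemma discounted_le (gamma : R) : (0 <= gamma <= 1)%R ->
  discounted gamma <= (gamma ^+ d)%:E.
Proof.
move=> gamma01; apply: le_trans (discounted_tail_le gamma01); rewrite leeDl //.
case/andP: gamma01 => gamma_ge0 gamma_le1.
by rewrite mule_ge0 // lee_fin subr_ge0 ler_wiXn2l.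
Qed.

Lemma discounted_ge_dirac (gamma : R) : (0 < gamma < 1)%R ->
  (gamma ^+ d)%:E <= discounted gamma -> forall n, h n = (n == d)%:R.
Proof.
move=> /andP[gamma_gt0 gamma_lt1] discounted_ge.
have gamma01 : (0 <= gamma <= 1)%R by rewrite ltW // ltW.
have c_gt0 : (0 < gamma ^+ d - gamma ^+ d.+1)%R by rewrite subr_gt0 ltr_iXn2l.
have tail_le0 : tail <= 0.
  rewrite -(pmule_rle0 _ (x := (gamma ^+ d - gamma ^+ d.+1)%:E)) ?lte_fin //.
  rewrite -(leeD2lE (x := (gamma ^+ d)%:E)) // adde0.
  exact: le_trans (leeD2r _ discounted_ge) (discounted_tail_le gamma01).
apply: dirac_of_tail_le0 => //.
rewrite -(ler_pM2l (exprn_gt0 d gamma_gt0)) mulr1 -lee_fin.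
have term_ge0 n : (0 <= gamma ^+ n * h n)%R by rewrite mulr_ge0 // exprn_ge0 // ltW.
rewrite (le_trans discounted_ge) // (nneseries_supp1 term_ge0 (d := d)) //.
by move=> n /(supp1_of_tail_le0 tail_le0) ->; rewrite mulr0.
Qed.

End HittingTimeDistribution.

Local Close Scope ereal_scope.

Section DeterministicMDP.
Variables (R : realType) (S A : finType) (P : gc_kernel R S A) (f : S -> A -> S -> S).
Hypothesis P_det : forall s a g s', P s a g s' = (s' == f s a g)%:R.

Lemma hit_prob_det (pi : gc_policy R S A) g n s :
  hit_prob P pi g n.+1 s =
  if s == g then 0 else \sum_a pi s g a * hit_prob P pi g n (f s a g).
Proof.
rewrite /=; case: ifP => // _; apply: eq_bigr => a _.
by under eq_bigr do rewrite P_det; rewrite sum_pred1_mul.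
Qed.

Section Policy.
Variable pi : gc_policy R S A.
Hypothesis pi_policy : is_policy pi.

Lemma hit_prob_ge0 g n s : 0 <= hit_prob P pi g n s.
Proof.
case: pi_policy => pi_ge0 _; elim: n s => [|n IHn] s; first exact: ler0n.
rewrite hit_prob_det; case: ifP => // _.
by apply: sumr_ge0 => a _; rewrite mulr_ge0.
Qed.

Lemma hit_prob_psum_le1 g N s : \sum_(n < N) hit_prob P pi g n s <= 1.
Proof.
case: pi_policy => pi_ge0 pi_sum1; elim: N s => [|N IHN] s; first by rewrite big_ord0.
rewrite big_ord_recl; under eq_bigr do rewrite hit_prob_det.
have [-> | sg] := eqVneq s g; first by rewrite big1 //= eqxx addr0.
rewrite /= (negbTE sg) add0r exchange_big /= -(pi_sum1 s g); apply: ler_sum => a _.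
by rewrite -mulr_sumr ler_piMr.
Qed.

End Policy.

Fixpoint reachable (g : S) (n : nat) (s : S) : bool :=
  if n is n'.+1 then (s == g) || [exists a, reachable g n' (f s a g)] else s == g.

Lemma hit_prob_unreachable pi g n s :
  ~~ reachable g n s -> hit_prob P pi g n s = 0.
Proof.
elim: n s => [|n IHn] s; first by move=> /= /negbTE ->.
rewrite hit_prob_det /= negb_or => /andP[/negbTE -> /existsPn unreach].
by rewrite big1 // => a _; rewrite IHn ?mulr0.
Qed.

Definition goal_dist (g s : S) : nat :=
  if pselect (exists n, reachable g n s) is left reach then ex_minn reach else 0.

Lemma goal_distP g s : (exists n, reachable g n s) ->
  reachable g (goal_dist g s) s /\ forall m, reachable g m s -> (goal_dist g s <= m)%N.
Proof. by move=> reach; rewrite /goal_dist; case: pselect => // ?; case: ex_minnP. Qed.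

Lemma hit_prob_lt_goal_dist pi g s n :
  (n < goal_dist g s)%N -> hit_prob P pi g n s = 0.
Proof.
move=> n_lt; apply: hit_prob_unreachable; apply/negP => reach_n.
have [_ /(_ n reach_n)] := goal_distP (ex_intro _ n reach_n).
by rewrite leqNgt n_lt.
Qed.

Lemma reachable_step g n s b : reachable g n (f s b g) -> reachable g n.+1 s.
Proof. by move=> reach_b; apply/orP; right; apply/existsP; exists b. Qed.

Lemma goal_dist_succ g s b k : reachable g k (f s b g) ->
  goal_dist g s = k.+1 -> goal_dist g (f s b g) = k.
Proof.
move=> reach_b dist_s; have [reach_next min_b] := goal_distP (ex_intro _ k reach_b).
have [_ min_s] := goal_distP (ex_intro _ k.+1 (reachable_step reach_b)).
apply/eqP; rewrite eqn_leq min_b //= -ltnS -dist_s.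
exact/min_s/(reachable_step reach_next).
Qed.

(* Only the choice at states from which [g] is reachable matters; falling back
   to [pi] elsewhere merely makes [greedy pi] a policy. *)
Definition greedy (pi : gc_policy R S A) : gc_policy R S A := fun s g a =>
  if [pick b | reachable g (goal_dist g s).-1 (f s b g)] is Some b then (a == b)%:R
  else pi s g a.

Lemma greedy_policy pi : is_policy pi -> is_policy (greedy pi).
Proof.
move=> [pi_ge0 pi_sum1]; split=> s g *; rewrite /greedy; case: pickP => // b _.
by under eq_bigr do rewrite -[_%:R]mulr1; rewrite sum_pred1_mul.
Qed.

Lemma hit_prob_greedy pi g s : (exists n, reachable g n s) ->
  forall n, hit_prob P (greedy pi) g n s = (n == goal_dist g s)%:R.
Proof.
move=> reach n; move dist_s: (goal_dist g s) => k.
elim: k s reach dist_s n => [|k IHk] s reach dist_s.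
  have [+ _] := goal_distP reach; rewrite dist_s /= => /eqP ->.
  by case=> [|n] /=; rewrite eqxx.
have sg : s != g.
  apply/negP => /eqP sg; have [_ /(_ 0%N)] := goal_distP reach.
  by rewrite dist_s sg /= eqxx => /(_ isT).
have [reach_s _] := goal_distP reach; rewrite dist_s /= (negbTE sg) /= in reach_s.
case/existsP: reach_s => a0 reach_a0.
have [b [greedy_b reach_b]] :
    exists b, (forall a, greedy pi s g a = (a == b)%:R) /\ reachable g k (f s b g).
  rewrite /greedy dist_s /=; case: pickP => [b reach_b | /(_ a0)]; last by rewrite reach_a0.
  by exists b.
case=> [|n]; first by rewrite /= (negbTE sg).
rewrite hit_prob_det (negbTE sg); under eq_bigr do rewrite greedy_b.
by rewrite sum_pred1_mul (IHk _ (ex_intro _ k reach_b)) // (goal_dist_succ reach_b).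
Qed.

Lemma hit_prob_eq_unreachable pi pi' g s : ~ (exists n, reachable g n s) ->
  forall n, hit_prob P pi g n s = hit_prob P pi' g n s.
Proof.
move=> unreach n; have unreach_n : ~~ reachable g n s.
  by apply/negP => reach; apply: unreach; exists n.
by rewrite !hit_prob_unreachable.
Qed.

Local Open Scope ereal_scope.

Lemma eq_value_hit_prob gamma pi pi' s g :
  (forall n, hit_prob P pi g n s = hit_prob P pi' g n s) ->
  value P gamma pi s g = value P gamma pi' s g.
Proof. by move=> eq_hit; rewrite /value; under eq_eseriesr do rewrite eq_hit. Qed.

Lemma eq_dT_hit_prob pi pi' s g :
  (forall n, hit_prob P pi g n s = hit_prob P pi' g n s) -> dT P pi s g = dT P pi' s g.
Proof.
by move=> eq_hit; rewrite /dT /reach_prob; under eq_eseriesr do rewrite eq_hit;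
  under [X in if _ then _ else X]eq_eseriesr do rewrite eq_hit.
Qed.

Section GreedyComparison.
Context { pi0 pi : gc_policy R S A } { s g : S }.
Hypothesis pi_policy : is_policy pi.

Let hit_ge0 n := hit_prob_ge0 pi_policy g n s.
Let hit_psum_le1 N := hit_prob_psum_le1 pi_policy g N s.
Let hit_lt_goal_dist n := @hit_prob_lt_goal_dist pi g s n.

Lemma value_greedy gamma : (0 <= gamma)%R -> (exists n, reachable g n s) ->
  value P gamma (greedy pi0) s g = (gamma ^+ goal_dist g s)%:E.
Proof.
move=> gamma_ge0 reach; rewrite /value (nneseries_supp1 _ (d := goal_dist g s)).
- by rewrite hit_prob_greedy // eqxx mulr1.
- by move=> n; rewrite hit_prob_greedy // mulr_ge0 ?exprn_ge0.
- by move=> n /negbTE; rewrite hit_prob_greedy // => ->; rewrite mulr0.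
Qed.

Lemma dT_greedy : (exists n, reachable g n s) ->
  dT P (greedy pi0) s g = (goal_dist g s)%:R%:E.
Proof.
move=> reach; rewrite /dT /reach_prob (nneseries_supp1 _ (d := goal_dist g s)).
- rewrite hit_prob_greedy // eqxx ltxx (nneseries_supp1 _ (d := goal_dist g s)).
  + by rewrite hit_prob_greedy // eqxx mulr1.
  + by move=> n; rewrite hit_prob_greedy // mulr_ge0.
  + by move=> n /negbTE; rewrite hit_prob_greedy // => ->; rewrite mulr0.
- by move=> n; rewrite hit_prob_greedy.
- by move=> n /negbTE; rewrite hit_prob_greedy // => ->.
Qed.

Lemma value_le_greedy gamma : (0 <= gamma <= 1)%R ->
  value P gamma pi s g <= value P gamma (greedy pi0) s g.
Proof.
move=> gamma01; have [reach | unreach] := pselect (exists n, reachable g n s).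
  rewrite value_greedy //; last by case/andP: gamma01.
  exact: (discounted_le hit_ge0 hit_psum_le1 hit_lt_goal_dist gamma01).
by rewrite (eq_value_hit_prob _ (hit_prob_eq_unreachable pi (greedy pi0) unreach)).
Qed.

Lemma dT_greedy_le : dT P (greedy pi0) s g <= dT P pi s g.
Proof.
have [reach | unreach] := pselect (exists n, reachable g n s); last first.
  by rewrite (eq_dT_hit_prob (hit_prob_eq_unreachable pi (greedy pi0) unreach)).
rewrite dT_greedy // /dT /reach_prob; case: ifP => [_ | /negbT]; first exact: leey.
by rewrite -leNgt; exact: mean_ge hit_ge0 hit_lt_goal_dist.
Qed.

Lemma dT_le_greedy_hit_prob : dT P pi s g <= dT P (greedy pi0) s g ->
  forall n, hit_prob P pi g n s = hit_prob P (greedy pi0) g n s.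
Proof.
have [reach | unreach] := pselect (exists n, reachable g n s); last first.
  by move=> _; exact: hit_prob_eq_unreachable.
rewrite dT_greedy // /dT /reach_prob; case: ifP => [_ | /negbT]; first by rewrite leye_eq.
rewrite -leNgt => mass_ge1 mean_le n; rewrite hit_prob_greedy //.
exact: mean_le_dirac hit_ge0 hit_psum_le1 hit_lt_goal_dist mass_ge1 mean_le n.
Qed.

Lemma value_ge_greedy_hit_prob gamma : (0 < gamma < 1)%R ->
  value P gamma (greedy pi0) s g <= value P gamma pi s g ->
  forall n, hit_prob P pi g n s = hit_prob P (greedy pi0) g n s.
Proof.
move=> gamma01; have [reach | unreach] := pselect (exists n, reachable g n s); last first.
  by move=> _; exact: hit_prob_eq_unreachable.
rewrite value_greedy //; last by case/andP: gamma01 => /ltW.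
move=> discounted_ge n; rewrite hit_prob_greedy //.
exact: (discounted_ge_dirac hit_ge0 hit_psum_le1 hit_lt_goal_dist gamma01 discounted_ge n).
Qed.

End GreedyComparison.
End DeterministicMDP.

Theorem proposition2 (R : realType) (S A : finType) (G : {set S})
    (P : gc_kernel R S A) (gamma : R) :
  deterministic P -> 0 <= gamma -> gamma < 1 ->
  (forall pi : gc_policy R S A, is_policy pi ->
     time_minimal P G pi -> return_optimal P G gamma pi) /\
  (0 < gamma -> forall pi : gc_policy R S A, is_policy pi ->
     return_optimal P G gamma pi -> time_minimal P G pi).
Proof.
move=> [f P_det] gamma_ge0 gamma_lt1.
split=> [pi pi_policy pi_min | gamma_gt0 pi pi_policy pi_opt] pi' pi'_policy s g gG;
  have greedy_pi := greedy_policy f pi_policy.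
- have gamma01 : 0 <= gamma <= 1 by rewrite gamma_ge0 ltW.
  have := dT_le_greedy_hit_prob P_det pi_policy (pi_min _ greedy_pi s g gG).
  move=> /(eq_value_hit_prob gamma) ->.
  exact: (value_le_greedy P_det pi'_policy gamma01).
- have gamma01 : 0 < gamma < 1 by rewrite gamma_gt0.
  have := value_ge_greedy_hit_prob P_det pi_policy gamma01 (pi_opt _ greedy_pi s g gG).
  move=> /eq_dT_hit_prob ->.
  exact: (dT_greedy_le P_det pi'_policy).
Qed.
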